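(* Let $d\ge 2$, $m>1$, $0\le s\le m-1$ and $t$ be integers with $\gcd(d,t)=1$ and $ds\equiv -t\pmod m$, and let $a$ be an indeterminate. Then for $0\le k\le s$, \[ \frac{(aq^t;q^d)_{s-k}}{(q^d/a;q^d)_{s-k}}\equiv (-a)^{s-2k}q^{s(ds-d+2t)/2+(d-t)k}\frac{(aq^t;q^d)_k}{(q^d/a;q^d)_k}\pmod{\Phi_m(q)}. \]
   Context: For an indeterminate $q$, $(x;q)_k=(1-x)(1-xq)\cdots(1-xq^{k-1})$ (with $(x;q)_0=1$). $\Phi_m(q)$ is the $m$-th cyclotomic polynomial in $q$. A congruence $A\equiv B\pmod{\Phi_m(q)}$ between rational functions in $q$ and $a$ means that $A-B$, written as a quotient of polynomials with denominator coprime to $\Phi_m(q)$, has numerator divisible by $\Phi_m(q)$. *)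

From HB Require Import structures.
From mathcomp Require Import all_boot all_order all_algebra all_field.
Set Implicit Arguments. Unset Strict Implicit. Unset Printing Implicit Defensive.
Import Order.TTheory GRing.Theory Num.Theory.
Local Open Scope ring_scope.

(* Polynomial ring Q[a][q]: outer variable 'X is q, inner variable is a. *)
Definition Rqa := {poly {poly rat}}.
Definition Kqa := {fraction Rqa}.

Definition qvar : Kqa := tofrac ('X : Rqa).
Definition avar : Kqa := tofrac ((('X : {poly rat})%:P) : Rqa).

Definition PhiQ (m : nat) : Rqa := map_poly (fun c : int => (c%:~R : {poly rat})) 'Phi_m.

Definition qpoch (x b : Kqa) (k : nat) : Kqa := \prod_(i < k) (1 - x * b ^+ i).

Definition rdvd (x y : Rqa) : Prop := exists c : Rqa, y = c * x.
Definition rcoprime (x y : Rqa) : Prop :=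
  forall g : Rqa, rdvd g x -> rdvd g y -> g \is a GRing.unit.

Definition congPhi (m : nat) (A B : Kqa) : Prop :=
  exists N D : Rqa, D != 0 /\ rcoprime D (PhiQ m) /\ rdvd (PhiQ m) N /\
    (A - B) * tofrac D = tofrac N.

From HB Require Import structures.
From mathcomp Require Import all_boot all_order all_algebra all_field.
From mathcomp Require Import zify ring.
Set Implicit Arguments. Unset Strict Implicit. Unset Printing Implicit Defensive.
Import Order.TTheory GRing.Theory Num.Theory.
Local Open Scope ring_scope.

(* Work in the localization of Q[a,q] at the polynomials whose leading
   coefficient in a is coprime to Phi_m(q): a congruence modulo Phi_m(q) there
   is one in the sense of congPhi, and q^m = 1 there. If x y z^(n+k) = z,
   reversing the last k factors of (x;z)_(n+k) gives
     (-y)^k z^C(k,2) (x;z)_(n+k) = (x;z)_n (y;z)_k.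
   For x = a q^t, y = q^d/a, z = q^d, the hypothesis d s = -t (mod m) gives
   x y z^s = z. Applying the identity with n + k = s to (x, y) and to (y, x),
   and with n = 0, k = s to (y, x), then eliminating (x;z)_s and (y;z)_s,
   yields the congruence; the remaining monomial is computed exactly. *)

Section Localization.
Variables (R : idomainType) (S : mulrClosed R) (p : R).
Local Notation F := {fraction R}.

Definition inloc (x : F) :=
  exists D N, [/\ D \in S, D != 0 & x * tofrac D = tofrac N].

Definition eqloc (x y : F) := exists2 z, inloc z & x - y = z * tofrac p.

(* [x != 0] is not redundant: [0^-1 = 0] would otherwise make [0] a unit. *)
Definition unitloc (x : F) := [/\ x != 0, inloc x & inloc x^-1].

Lemma inloc_tofrac r : inloc (tofrac r).
Proof. by exists 1, r; rewrite rpred1 oner_neq0 tofrac1 mulr1. Qed.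

Lemma inloc1 : inloc 1.
Proof. by rewrite -tofrac1; apply: inloc_tofrac. Qed.

Lemma inlocN (x : F) : inloc x -> inloc (- x).
Proof. by case=> D [N [SD D0 e]]; exists D, (- N); rewrite tofracN -e mulNr. Qed.

Lemma inlocD (x y : F) : inloc x -> inloc y -> inloc (x + y).
Proof.
case=> [D1 [N1 [SD1 D10 e1]]] [D2 [N2 [SD2 D20 e2]]].
exists (D1 * D2), (N1 * D2 + N2 * D1); rewrite rpredM ?mulf_neq0 //.
by split=> //; rewrite tofracD !tofracM -e1 -e2; ring.
Qed.

Lemma inlocB (x y : F) : inloc x -> inloc y -> inloc (x - y).
Proof. by move=> Lx Ly; apply/inlocD/inlocN. Qed.

Lemma inlocM (x y : F) : inloc x -> inloc y -> inloc (x * y).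
Proof.
case=> [D1 [N1 [SD1 D10 e1]]] [D2 [N2 [SD2 D20 e2]]].
exists (D1 * D2), (N1 * N2); rewrite rpredM ?mulf_neq0 //.
by split=> //; rewrite !tofracM -e1 -e2; ring.
Qed.

Lemma inlocX (x : F) n : inloc x -> inloc (x ^+ n).
Proof.
by move=> Lx; elim: n => [|n IHn]; rewrite ?expr0 ?exprS; [apply: inloc1 | apply: inlocM].
Qed.

Lemma inloc_prod I r (P : pred I) (G : I -> F) :
  (forall i, inloc (G i)) -> inloc (\prod_(i <- r | P i) G i).
Proof. by move=> LG; apply: big_ind => //; [apply: inloc1 | apply: inlocM]. Qed.

Lemma unitloc_neq0 (x : F) : unitloc x -> x != 0. Proof. by case. Qed.
Lemma unitloc_inloc (x : F) : unitloc x -> inloc x. Proof. by case. Qed.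

Lemma unitloc_tofrac D : D \in S -> D != 0 -> unitloc (tofrac D).
Proof.
move=> SD D0; split; [by rewrite tofrac_eq | exact: inloc_tofrac |].
by exists D, 1; rewrite mulVf ?tofrac1 // tofrac_eq.
Qed.

Lemma unitlocV (x : F) : unitloc x -> unitloc x^-1.
Proof. by case=> x0 Lx LVx; split; rewrite ?invr_eq0 ?invrK. Qed.

Lemma unitlocN (x : F) : unitloc x -> unitloc (- x).
Proof. by case=> x0 Lx LVx; split; rewrite ?oppr_eq0 ?invrN //; apply: inlocN. Qed.

Lemma unitlocM (x y : F) : unitloc x -> unitloc y -> unitloc (x * y).
Proof.
case=> x0 Lx LVx [y0 Ly LVy]; split; first exact: mulf_neq0.
  exact: inlocM.
by rewrite invfM; apply: inlocM.
Qed.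

Lemma unitlocX (x : F) n : unitloc x -> unitloc (x ^+ n).
Proof.
by case=> x0 Lx LVx; split; rewrite ?expf_neq0 -?exprVn //; apply: inlocX.
Qed.

Lemma unitlocXz (x : F) (n : int) : unitloc x -> unitloc (x ^ n).
Proof.
move=> Ux; case: n => n; first by rewrite -exprnP; apply: unitlocX.
by rewrite NegzE -invr_expz -exprnP; apply/unitlocV/unitlocX.
Qed.

Lemma unitloc_prod I r (P : pred I) (G : I -> F) :
  (forall i, unitloc (G i)) -> unitloc (\prod_(i <- r | P i) G i).
Proof.
move=> UG; apply: big_ind => //; last exact: unitlocM.
by rewrite -tofrac1; apply: unitloc_tofrac; rewrite ?rpred1 ?oner_neq0.
Qed.

Lemma eqloc_refl (x : F) : eqloc x x.
Proof. by exists 0; [rewrite -tofrac0; apply: inloc_tofrac | rewrite subrr mul0r]. Qed.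

Lemma eqloc_sym (x y : F) : eqloc x y -> eqloc y x.
Proof. by case=> z Lz e; exists (- z); [apply: inlocN | rewrite mulNr -e opprB]. Qed.

Lemma eqloc_trans (x y w : F) : eqloc x y -> eqloc y w -> eqloc x w.
Proof.
case=> z1 L1 e1 [z2 L2 e2]; exists (z1 + z2); first exact: inlocD.
by rewrite mulrDl -e1 -e2 addrA subrK.
Qed.

Lemma eqlocB (x1 y1 x2 y2 : F) : eqloc x1 y1 -> eqloc x2 y2 -> eqloc (x1 - x2) (y1 - y2).
Proof.
case=> z1 L1 e1 [z2 L2 e2]; exists (z1 - z2); first exact: inlocB.
by rewrite mulrBl -e1 -e2; ring.
Qed.

Lemma eqlocMl (c x y : F) : inloc c -> eqloc x y -> eqloc (c * x) (c * y).
Proof.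
by move=> Lc [z Lz e]; exists (c * z); [apply: inlocM | rewrite -mulrA -e mulrBr].
Qed.

Lemma eqlocM (x1 y1 x2 y2 : F) : inloc y1 -> inloc x2 ->
  eqloc x1 y1 -> eqloc x2 y2 -> eqloc (x1 * x2) (y1 * y2).
Proof.
move=> Ly1 Lx2 [z1 L1 e1] [z2 L2 e2]; exists (z1 * x2 + y1 * z2).
  by apply: inlocD; apply: inlocM.
by rewrite mulrDl -!mulrA [x2 * _]mulrC -e2 mulrA -e1; ring.
Qed.

Lemma eqloc_prod n (G H : 'I_n -> F) :
  (forall i, inloc (G i)) -> (forall i, inloc (H i)) ->
  (forall i, eqloc (G i) (H i)) -> eqloc (\prod_(i < n) G i) (\prod_(i < n) H i).
Proof.
move=> LG LH GH; pose K x y := [/\ inloc x, inloc y & eqloc x y].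
suff [] : K (\prod_(i < n) G i) (\prod_(i < n) H i) by [].
apply: (big_ind2 K) => [|x1 y1 x2 y2 [Lx1 Ly1 e1] [Lx2 Ly2 e2]|i _].
- by split; [apply: inloc1 | apply: inloc1 | apply: eqloc_refl].
- by split; [exact: inlocM | exact: inlocM | exact: eqlocM].
- by split.
Qed.

Lemma eqloc_tofrac r1 r2 c : r1 - r2 = c * p -> eqloc (tofrac r1) (tofrac r2).
Proof.
by move=> e; exists (tofrac c); [apply: inloc_tofrac | rewrite -tofracB e tofracM].
Qed.

Lemma eqloc_ratio (x1 y1 x2 y2 w : F) : unitloc y1 -> unitloc y2 ->
  eqloc (x1 * y2) (w * x2 * y1) -> eqloc (x1 / y1) (w * (x2 / y2)).
Proof.
move=> [y10 _ LV1] [y20 _ LV2] /(eqlocMl (inlocM LV1 LV2)).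
rewrite ![_^-1 * _^-1 * _]mulrC mulrACA mulfV // mulr1 [in X in X -> _]mulrA.
by rewrite (mulfK y10) mulrA.
Qed.

Lemma eqloc1V (v : F) : unitloc v -> eqloc v 1 -> eqloc v^-1 1.
Proof.
by move=> [v0 _ LVv] /eqloc_sym /(eqlocMl LVv); rewrite mulr1 mulVf.
Qed.

Lemma eqloc1X (v : F) n : inloc v -> eqloc v 1 -> eqloc (v ^+ n) 1.
Proof.
move=> Lv ev; elim: n => [|n IHn]; first by rewrite expr0; apply: eqloc_refl.
by rewrite exprS -[1]mulr1; apply: eqlocM => //; [apply: inloc1 | apply: inlocX].
Qed.

Lemma eqloc1Xz (v : F) (l : int) : unitloc v -> eqloc v 1 -> eqloc (v ^ l) 1.
Proof.
move=> Uv ev; case: l => n; first by rewrite -exprnP; apply/eqloc1X/ev/unitloc_inloc.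
rewrite NegzE -invr_expz -exprnP; apply: eqloc1V; first exact: unitlocX.
exact/eqloc1X/ev/unitloc_inloc.
Qed.

Lemma eqloc_expz_mod (u : F) (n : nat) (i j : int) : unitloc u -> eqloc (u ^+ n) 1 ->
  (i == j %[mod n])%Z -> eqloc (u ^ i) (u ^ j).
Proof.
move=> Uu eun; rewrite eqz_mod_dvd => /dvdzP [l e].
have -> : i = j + n%:Z * l by rewrite mulrC -e addrC subrK.
rewrite expfzDr ?unitloc_neq0 // -exprz_exp -[u ^ j in X in eqloc _ X]mulr1.
apply: eqlocMl; first exact/unitloc_inloc/unitlocXz.
by apply: eqloc1Xz; rewrite -exprnP //; apply: unitlocX.
Qed.

End Localization.

Definition Phim (m : nat) : {poly rat} := map_poly intr 'Phi_m.

Lemma PhiQE m : PhiQ m = (Phim m)^:P.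
Proof.
by rewrite /PhiQ /Phim -map_poly_comp; apply: eq_map_poly => c /=; rewrite rmorph_int.
Qed.

Lemma Phim_monic m : Phim m \is monic.
Proof. by rewrite monicE lead_coef_map_eq (monicP (Cyclotomic_monic m)) ?oner_eq0. Qed.

Lemma Phim_dvd_Xn_sub1 m : (0 < m)%N -> Phim m %| 'X^m - 1.
Proof.
move=> m_gt0; have := congr1 (map_poly (intr : int -> rat)) (prod_Cyclotomic m_gt0).
rewrite rmorphB rmorph1 rmorphXn /= map_polyX rmorph_prod => <-.
have m_div : m \in divisors m by rewrite -dvdn_divisors.
by rewrite (perm_big _ (perm_to_rem m_div)) big_cons dvdp_mulr.
Qed.

Lemma coprime_X_Phim m : (0 < m)%N -> coprimep 'X (Phim m).
Proof.
move=> m_gt0; apply: coprimep_dvdl (Phim_dvd_Xn_sub1 m_gt0) _.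
rewrite coprimep_sym -[X in coprimep _ X]subr0 coprimep_XsubC rootE !hornerE.
by rewrite expr0n gtn_eqF // sub0r oppr_eq0 oner_eq0.
Qed.

Definition lead_coefY (D : Rqa) : {poly rat} := lead_coef (swapXY D).

(* Unlike coprimality to Phi_m(q) in Q[a,q], which it implies, this condition
   is visibly multiplicative: leading coefficients multiply. *)
Definition leadY_coprime (m : nat) : {pred Rqa} :=
  fun D => coprimep (lead_coefY D) (Phim m).

Fact leadY_coprime_mulr_closed m : mulr_closed (leadY_coprime m).
Proof.
rewrite /leadY_coprime /lead_coefY; split=> [|D1 D2]; rewrite !unfold_in.
  by rewrite rmorph1 lead_coef1 coprime1p.
by rewrite rmorphM lead_coefM coprimepMl => -> ->.
Qed.

HB.instance Definition _ m :=
  GRing.isMulClosed.Build Rqa (leadY_coprime m) (leadY_coprime_mulr_closed m).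

Lemma leadY_coprime_rcoprime m D : D \in leadY_coprime m -> rcoprime D (PhiQ m).
Proof.
move=> cD g [c Dc] [c' Phic].
have Phi_swap : (Phim m)%:P = swapXY c' * swapXY g.
  by rewrite -swapXY_map_polyC -PhiQE Phic rmorphM.
have /size_poly1P [h h0 gh] : size (swapXY g) == 1.
  have : size (Phim m)%:P == 1 by rewrite size_polyC monic_neq0 ?Phim_monic.
  by rewrite Phi_swap size_mul_eq1 => /andP[].
have h_Phi : h %| Phim m.
  by rewrite -[Phim m]lead_coefC Phi_swap gh lead_coefM lead_coefC dvdp_mull.
have h_lead : h %| lead_coefY D.
  by rewrite /lead_coefY Dc rmorphM /= gh lead_coefM lead_coefC dvdp_mull.
have : coprimep h h.
  by apply: coprimep_dvdl h_Phi _; apply: coprimep_dvdr h_lead _.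
rewrite coprimepp => /size_poly1P [b b0 hb].
by rewrite -[g]swapXYK gh hb swapXY_polyC map_polyC /= !rmorph_unit // unitfE.
Qed.

Lemma congPhi_eqloc m x y : eqloc (leadY_coprime m) (PhiQ m) x y -> congPhi m x y.
Proof.
case=> z [D [N [SD D0 e]]] xy; exists (N * PhiQ m), D; split=> //.
split; [exact: leadY_coprime_rcoprime | split; first by exists N].
by rewrite xy mulrAC e tofracM.
Qed.

Lemma qvar_neq0 : qvar != 0.
Proof. by rewrite tofrac_eq polyX_eq0. Qed.

Lemma avar_neq0 : avar != 0.
Proof. by rewrite tofrac_eq polyC_eq0 polyX_eq0. Qed.

Section CyclotomicLocalization.
Variable m : nat.
Hypothesis m_gt0 : (0 < m)%N.

Local Notation unitPhi := (unitloc (leadY_coprime m)).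
Local Notation eqPhi := (eqloc (leadY_coprime m) (PhiQ m)).

Lemma unitPhi_q : unitPhi qvar.
Proof.
apply: unitloc_tofrac; rewrite ?polyX_eq0 //.
by rewrite unfold_in /leadY_coprime /lead_coefY swapXY_X lead_coefC coprime_X_Phim.
Qed.

Lemma unitPhi_linear_a (c : {poly rat}) n :
  unitPhi (tofrac c^:P + qvar ^+ n * avar).
Proof.
have Xn0 : ('X^n : {poly rat}) != 0 by rewrite monic_neq0 ?monicXn.
have lead_D : lead_coefY (c^:P + ('X^n)^:P * 'Y) = 'X^n.
  rewrite /lead_coefY rmorphD rmorphM /= !swapXY_map_polyC swapXY_Y addrC.
  rewrite lead_coefDl ?lead_coefMX ?lead_coefC // size_mulX ?polyC_eq0 //.
  by rewrite !size_polyC Xn0 ltnS leq_b1.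
have -> : tofrac c^:P + qvar ^+ n * avar = tofrac (c^:P + ('X^n)^:P * 'Y).
  by rewrite tofracD tofracM rmorphXn /= map_polyX tofracXn.
apply: unitloc_tofrac.
  by rewrite unfold_in /leadY_coprime lead_D coprimep_expl ?coprime_X_Phim.
by rewrite -swapXY_eq0 -lead_coef_eq0 -/(lead_coefY _) lead_D.
Qed.

Lemma unitPhi_a : unitPhi avar.
Proof. by have := unitPhi_linear_a 0 0; rewrite rmorph0 tofrac0 add0r expr0 mul1r. Qed.

Lemma unitPhi_1sub_aq (e : int) : unitPhi (1 - avar * qvar ^ e).
Proof.
case: e => n.
  have /unitlocN := unitPhi_linear_a (-1) n.
  by rewrite -exprnP rmorphN rmorph1 tofracN tofrac1 opprD opprK mulrC.
rewrite NegzE -invr_expz -exprnP.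
have -> : 1 - avar / qvar ^+ n.+1 =
    - (tofrac (- 'X^(n.+1))^:P + qvar ^+ 0 * avar) / qvar ^+ n.+1.
  rewrite expr0 mul1r rmorphN rmorphXn /= map_polyX tofracN tofracXn.
  by rewrite opprD opprK mulrBl mulfV ?expf_neq0 ?qvar_neq0.
by apply: unitlocM; [apply/unitlocN/unitPhi_linear_a | apply/unitlocV/unitlocX/unitPhi_q].
Qed.

Lemma unitPhi_1sub_qa (e : int) : unitPhi (1 - qvar ^ e / avar).
Proof.
have qe0 : qvar ^ e != 0 by rewrite expfz_eq0 negb_and qvar_neq0 orbT.
have -> : 1 - qvar ^ e / avar = - (qvar ^ e / avar) * (1 - avar * qvar ^ (- e)).
  by rewrite -invr_expz mulrBr mulr1 mulNr mulrA divfK ?avar_neq0 // divff // opprK addrC.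
apply: unitlocM; last exact: unitPhi_1sub_aq.
by apply/unitlocN/unitlocM; [apply/unitlocXz/unitPhi_q | apply/unitlocV/unitPhi_a].
Qed.

Lemma eqPhi_qXm : eqPhi (qvar ^+ m) 1.
Proof.
have /dvdpP [c Xm1] := Phim_dvd_Xn_sub1 m_gt0.
rewrite -tofrac1 -tofracXn; apply: (@eqloc_tofrac _ _ _ _ _ c^:P).
by rewrite PhiQE -rmorphM -Xm1 rmorphB rmorph1 rmorphXn /= map_polyX.
Qed.

Lemma eqPhi_q_expz (i j : int) : (i == j %[mod m])%Z -> eqPhi (qvar ^ i) (qvar ^ j).
Proof. exact: eqloc_expz_mod unitPhi_q eqPhi_qXm. Qed.

Lemma unitPhi_aq (t : int) : unitPhi (avar * qvar ^ t).
Proof. by apply: unitlocM; [apply: unitPhi_a | apply/unitlocXz/unitPhi_q]. Qed.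

Lemma unitPhi_qa (d : int) : unitPhi (qvar ^ d / avar).
Proof. by apply: unitlocM; [apply/unitlocXz/unitPhi_q | apply/unitlocV/unitPhi_a]. Qed.

Lemma unitPhi_qpoch_qa (d : int) n : unitPhi (qpoch (qvar ^ d / avar) (qvar ^ d) n).
Proof.
apply: unitloc_prod => i.
by rewrite exprnP exprz_exp mulrAC -expfzDr ?qvar_neq0 //; apply: unitPhi_1sub_qa.
Qed.

Lemma eqPhi_aq_qa (d t : int) (s : nat) : (d * s%:Z == - t %[mod m])%Z ->
  eqPhi (avar * qvar ^ t * (qvar ^ d / avar) * (qvar ^ d) ^+ s) (qvar ^ d).
Proof.
move=> dst; have -> : avar * qvar ^ t * (qvar ^ d / avar) * (qvar ^ d) ^+ s =
    qvar ^ d * qvar ^ (t + d * s%:Z).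
  rewrite [_ * (_ / avar)]mulrC -!mulrA mulKf ?avar_neq0 //.
  by rewrite exprnP exprz_exp -expfzDr ?qvar_neq0.
rewrite -[X in eqPhi _ X]mulr1 -(expr0z qvar); apply: eqlocMl.
  exact/unitloc_inloc/unitlocXz/unitPhi_q.
by apply: eqPhi_q_expz; move: dst; rewrite !eqz_mod_dvd subr0 opprK addrC.
Qed.

End CyclotomicLocalization.

Section QPochhammerReflection.
Variables (S : mulrClosed Rqa) (p : Rqa).
Local Notation inloc := (inloc S).
Local Notation unitloc := (unitloc S).
Local Notation eqloc := (eqloc S p).

Lemma inloc_qpoch (x z : Kqa) n : inloc x -> inloc z -> inloc (qpoch x z n).
Proof.
move=> Lx Lz; apply: inloc_prod => i.
by apply: inlocB; [apply: inloc1 | apply/inlocM/inlocX].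
Qed.

Lemma qpoch_reflect (x y z : Kqa) n k : inloc x -> unitloc y -> unitloc z ->
  eqloc (x * y * z ^+ (n + k)) z ->
  eqloc ((- y) ^+ k * z ^+ 'C(k, 2) * qpoch x z (n + k)) (qpoch x z n * qpoch y z k).
Proof.
move=> Lx [y0 Ly LVy] [z0 Lz LVz] exyz.
rewrite /qpoch big_split_ord /= mulrCA; apply: eqlocMl; first exact: inloc_qpoch.
(* The i-th factor from the end, 1 - x z^(n+k-1-i), is congruent to 1 - (y z^i)^-1. *)
rewrite (reindex_inj rev_ord_inj) /=.
have -> : (- y) ^+ k * z ^+ 'C(k, 2) = \prod_(i < k) (- y * z ^+ i).
  by rewrite big_split /= prodr_const card_ord prodrXr -bin2_sum big_mkord.
rewrite -big_split /=; apply: eqloc_prod => i.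
- exact: inlocM (inlocM (inlocN Ly) (inlocX _ Lz)) (inlocB (inloc1 S) (inlocM Lx (inlocX _ Lz))).
- exact: inlocB (inloc1 S) (inlocM Ly (inlocX _ Lz)).
have eN : (n + (k - i.+1) + i).+1 = (n + k)%N by have := ltn_ord i; lia.
have -> : - y * z ^+ i * (1 - x * z ^+ (n + (k - i.+1))) =
    x * y * z ^+ (n + k) / z - y * z ^+ i.
  by rewrite -eN exprSr mulrA (mulfK z0) (exprD z (n + (k - i.+1)) i); ring.
apply: eqlocB; last exact: eqloc_refl.
by rewrite -(mulfV z0) ![_ / z]mulrC; apply: eqlocMl.
Qed.

Lemma qpoch_ratio_reflect (x y z : Kqa) s k : (k <= s)%N ->
  unitloc x -> unitloc y -> unitloc z ->
  unitloc (qpoch y z (s - k)) -> unitloc (qpoch y z k) -> eqloc (x * y * z ^+ s) z ->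
  eqloc (qpoch x z (s - k) / qpoch y z (s - k))
    ((- y) ^+ k * z ^+ 'C(k, 2) * ((- x) ^+ s * z ^+ 'C(s, 2))
       / ((- x) ^+ k * z ^+ 'C(k, 2)) * (qpoch x z k / qpoch y z k)).
Proof.
move=> k_le_s Ux Uy Uz Uysk Uyk exyz.
have eyxz : eqloc (y * x * z ^+ s) z by rewrite [y * x]mulrC.
have := qpoch_reflect (n := s - k) (k := k) (unitloc_inloc Ux) Uy Uz.
rewrite subnK // => /(_ exyz) h1.
have := qpoch_reflect (n := s - k) (k := k) (unitloc_inloc Uy) Ux Uz.
rewrite subnK // => /(_ eyxz) h2.
have := qpoch_reflect (n := 0) (k := s) (unitloc_inloc Uy) Ux Uz eyxz.
rewrite add0n [qpoch y z 0]big_ord0 mul1r => h3.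
set W1 := (- y) ^+ k * z ^+ 'C(k, 2) in h1 *.
set W2 := (- x) ^+ k * z ^+ 'C(k, 2) in h2 *.
set W3 := (- x) ^+ s * z ^+ 'C(s, 2) in h3 *.
have UW1 : unitloc W1 by apply/unitlocM/unitlocX/Uz/unitlocX/unitlocN.
have UW2 : unitloc W2 by apply/unitlocM/unitlocX/Uz/unitlocX/unitlocN.
have UW3 : unitloc W3 by apply/unitlocM/unitlocX/Uz/unitlocX/unitlocN.
apply: eqloc_ratio Uysk Uyk _; apply: (eqloc_trans (eqloc_sym h1)).
apply: (eqloc_trans (eqlocMl (unitloc_inloc UW1) (eqloc_sym h3))).
have -> : W1 * (W3 * qpoch y z s) = W1 * W3 / W2 * (W2 * qpoch y z s).
  by rewrite [RHS]mulrA (divfK (unitloc_neq0 UW2)) mulrA.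
rewrite -[X in eqloc _ X]mulrA [qpoch x z k * _]mulrC; apply: eqlocMl h2.
exact/unitloc_inloc/unitlocM/unitlocV/UW2/unitlocM.
Qed.

End QPochhammerReflection.

Section Monomials.
Variables (F : fieldType) (b c : F).
Hypotheses (b0 : b != 0) (c0 : c != 0).

Let mono (i j : int) := b ^ i * c ^ j.

Let monoM i j i' j' : mono i j * mono i' j' = mono (i + i') (j + j').
Proof. by rewrite /mono !expfzDr //; ring. Qed.

Let monoV i j : (mono i j)^-1 = mono (- i) (- j).
Proof. by rewrite /mono invfM -!invr_expz mulrC. Qed.

Let monoXn i j n : mono i j ^+ n = mono (i * n%:Z) (j * n%:Z).
Proof. by rewrite /mono exprMn !exprnP !exprz_exp. Qed.

Lemma reflection_monomial (d t : int) (s k : nat) :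
  (c ^ d / b) ^+ k * (c ^ d) ^+ 'C(k, 2) * ((b * c ^ t) ^+ s * (c ^ d) ^+ 'C(s, 2))
    / ((b * c ^ t) ^+ k * (c ^ d) ^+ 'C(k, 2)) =
  b ^ (s%:Z - 2 * k%:Z) * c ^ (d * 'C(s, 2)%:Z + t * s%:Z + (d - t) * k%:Z).
Proof.
have -> : c ^ d / b = mono (-1) d by rewrite /mono mulrC -invr_expz expr1z.
have -> : b * c ^ t = mono 1 t by rewrite /mono expr1z.
have -> : c ^ d = mono 0 d by rewrite /mono expr0z mul1r.
rewrite -[_ * c ^ _]/(mono _ _) !monoXn !monoM monoV monoM; congr mono; ring.
Qed.

End Monomials.

Lemma bin2_double n : ('C(n, 2) * 2 = n * n.-1)%N.
Proof. by elim: n => // n IHn; rewrite binS bin1 mulnDl IHn; case: n {IHn} => //= n; nia. Qed.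

Lemma divz_bin2 (d t : int) (s : nat) :
  divz (s%:Z * (d * s%:Z - d + 2 * t)) 2 = d * 'C(s, 2)%:Z + t * s%:Z.
Proof.
rewrite -[RHS](@mulzK _ 2) //; congr divz.
have := congr1 (fun n : nat => d * n%:Z) (bin2_double s) => /=.
case: s => [|s] /=; rewrite ?bin0n; lia.
Qed.

Theorem lemma1 (d : int) (m s : nat) (t : int) (k : nat) :
  2 <= d -> (1 < m)%N -> (s <= m - 1)%N ->
  coprimez d t -> (d * s%:Z == - t %[mod m%:Z])%Z ->
  (k <= s)%N ->
  congPhi m
    (qpoch (avar * qvar ^ t) (qvar ^ d) (s - k)
       / qpoch (qvar ^ d / avar) (qvar ^ d) (s - k))
    ((- avar) ^ (s%:Z - 2 * k%:Z)
       * qvar ^ (divz (s%:Z * (d * s%:Z - d + 2 * t)) 2 + (d - t) * k%:Z)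
       * (qpoch (avar * qvar ^ t) (qvar ^ d) k
          / qpoch (qvar ^ d / avar) (qvar ^ d) k)).
Proof.
(* Only m > 0 and d s = -t (mod m) are needed. *)
move=> _ /ltnW m_gt0 _ _ dst k_le_s.
have a0 : - avar != 0 by rewrite oppr_eq0 avar_neq0.
rewrite divz_bin2 -(reflection_monomial a0 qvar_neq0) invrN mulrN (mulNr avar).
apply: congPhi_eqloc; apply: qpoch_ratio_reflect k_le_s _ _ _ _ _ _.
- exact: unitPhi_aq.
- exact: unitPhi_qa.
- exact/unitlocXz/unitPhi_q.
- exact: unitPhi_qpoch_qa.
- exact: unitPhi_qpoch_qa.
- exact: eqPhi_aq_qa.
Qed.
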